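(* Let $X_1,\dots,X_n$ be i.i.d. $\mathsf{Bernoulli}(p)$ with $p\in[\frac12,1)$, and let $Y_k=X_k\oplus V_k$ for $k=1,\dots,n$, where $V_1,\dots,V_n$ are i.i.d. $\mathsf{Bernoulli}(\alpha)$, independent of $X^n$, with $\alpha\in[0,\frac12)$ and $\bar\alpha>p$. Let $q=\alpha\bar p+\bar\alpha p$ and $$\zeta_n(\varepsilon)=\frac{\bar\alpha^n-\varepsilon^n}{(\bar\alpha p)^n-(\alpha\bar p)^n}.$$ Then there exists $\varepsilon_{\mathsf L}<\bar\alpha$ such that for all $\varepsilon\in[\varepsilon_{\mathsf L},\bar\alpha]$, $$\underline{\mathcal{h}}_n^n(\varepsilon)=1-\zeta_n(\varepsilon)q^n,$$ and the $2^n$-ary Z-channel $\mathsf{Z}_n(\zeta_n(\varepsilon))$ achieves $\underline{\mathcal{h}}_n(\varepsilon)$ on this interval.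
   Context: $\bar a=1-a$; $\oplus$ is addition mod 2; $\mathsf{Bernoulli}(p)$ has $\Pr(\cdot=1)=p$. $\mathsf{P}_{\mathsf{c}}(X^n)=\max_{x^n}P_{X^n}(x^n)$ and $\mathsf{P}_{\mathsf{c}}(X^n|Z^n)=\sum_{z^n}\max_{x^n}P_{X^nZ^n}(x^n,z^n)$. For $\varepsilon\in[\mathsf{P}_{\mathsf{c}}^{1/n}(X^n),\mathsf{P}_{\mathsf{c}}^{1/n}(X^n|Y^n)]$ (here $=[p,\bar\alpha]$), $$\underline{\mathcal{h}}_n(\varepsilon)=\sup\{\mathsf{P}_{\mathsf{c}}^{1/n}(Y^n|Z^n): P_{Z^n|Y^n},\ \mathcal{Z}^n=\{0,1\}^n,\ X^n - Y^n - Z^n,\ \mathsf{P}_{\mathsf{c}}^{1/n}(X^n|Z^n)\le\varepsilon\},$$ with $X^n - Y^n - Z^n$ a Markov chain. The $2^n$-ary Z-channel $\mathsf{Z}_n(\gamma)$ is the channel $\mathsf{W}$ with input and output alphabet $\{0,1\}^n$ given by $\mathsf{W}(y|y)=1$ for $y\ne\mathbf 1$, $\mathsf{W}(\mathbf 0|\mathbf 1)=\gamma$, $\mathsf{W}(\mathbf 1|\mathbf 1)=1-\gamma$, where $\mathbf 0=(0,\dots,0)$, $\mathbf 1=(1,\dots,1)$. ''Achieves'' means it satisfies the privacy constraint and attains the supremum. *)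

From HB Require Import structures.
From mathcomp Require Import all_boot all_order all_algebra.
From mathcomp Require Import classical_sets reals exp.
Set Implicit Arguments. Unset Strict Implicit. Unset Printing Implicit Defensive.
Import Order.TTheory GRing.Theory Num.Theory.
Local Open Scope ring_scope.
Local Open Scope classical_set_scope.

Definition bstr (n : nat) := {ffun 'I_n -> bool}.
Definition zeros n : bstr n := [ffun => false].
Definition ones n : bstr n := [ffun => true].

Section Model.
Variable R : realType.
Variable n : nat.

Definition PX (p : R) (x : bstr n) : R :=
  \prod_(i < n) (if x i then p else 1 - p).

Definition PYgX (a : R) (x y : bstr n) : R :=
  \prod_(i < n) (if addb (x i) (y i) then a else 1 - a).

Definition is_channel (W : bstr n -> bstr n -> R) : Prop :=
  (forall y z, 0 <= W y z) /\ (forall y, \sum_z W y z = 1).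

(* joint law of (X^n, Y^n, Z^n) for the Markov chain X - Y - Z *)
Definition Pjoint (p a : R) (W : bstr n -> bstr n -> R) (x y z : bstr n) : R :=
  PX p x * PYgX a x y * W y z.

Definition PcXgZ p a W : R :=
  \sum_(z : bstr n) \big[Num.max/0]_(x : bstr n) \sum_(y : bstr n) Pjoint p a W x y z.

Definition PcYgZ p a W : R :=
  \sum_(z : bstr n) \big[Num.max/0]_(y : bstr n) \sum_(x : bstr n) Pjoint p a W x y z.

Definition nroot (u : R) : R := u `^ (n%:R)^-1.

Definition feasible p a eps W : Prop :=
  is_channel W /\ nroot (PcXgZ p a W) <= eps.

Definition hlow (p a eps : R) : R :=
  sup [set r : R | exists W, feasible p a eps W /\ r = nroot (PcYgZ p a W)].

Definition Zchan (g : R) (y z : bstr n) : R :=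
  if y != ones n then (z == y)%:R
  else if z == zeros n then g
  else if z == ones n then 1 - g else 0.

Definition achieves p a eps W : Prop :=
  feasible p a eps W /\ nroot (PcYgZ p a W) = hlow p a eps.

End Model.

Definition zeta {R : realType} (n : nat) (p a eps : R) : R :=
  ((1 - a) ^+ n - eps ^+ n) / (((1 - a) * p) ^+ n - (a * (1 - p)) ^+ n).
Arguments PX {R} n p x.
Arguments PcXgZ {R} n p a W.
Arguments PcYgZ {R} n p a W.
Arguments hlow {R} n p a eps.
Arguments Zchan {R} n g y z.
Arguments achieves {R} n p a eps W.
Arguments feasible {R} n p a eps W.
Arguments is_channel {R} n W.

From HB Require Import structures.
From mathcomp Require Import all_boot all_order all_algebra.
From mathcomp Require Import classical_sets reals exp.
From mathcomp Require Import ring lra.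
Import Order.TTheory GRing.Theory Num.Theory.
Local Open Scope ring_scope.
Set Implicit Arguments. Unset Strict Implicit. Unset Printing Implicit Defensive.

(* A single product inequality drives the converse: if [0 <= B <= A] and
   [u_i B <= v_i A] for all i, then
     [(prod u - prod v) (A + B)^n <= (A^n - B^n) prod (u + v)].
   With [A = (1 - a) p], [B = a (1 - p)] and [u_i], [v_i] the probabilities
   that [(X_i, Y_i)] equals [(y_i, y_i)], resp. [(~~ y_i, y_i)], it reads
     [(P(y, y) - P(x, y)) q^n <= (A^n - B^n) P_Y(y)].
   Column by column of an arbitrary channel, taking for [x] the MAP guess of
   [Y] from [Z = z], this yields
     [((1 - a)^n - P_c(X|Z)) q^n <= (A^n - B^n) (1 - P_c(Y|Z))],
   so the privacy constraint [P_c(X|Z) <= eps^n] forces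
   [P_c(Y|Z) <= 1 - zeta_n(eps) q^n].
   The Z-channel [Z_n(g)] only sends the input [1...1] to [0...0], with
   probability [g], hence [P_c(Y|Z) = 1 - g q^n]; when [g] is small the MAP
   guess of [X] from [Z = z] is still [z], so
   [P_c(X|Z) <= (1 - a)^n - g (A^n - B^n)], which is [eps^n] for
   [g = zeta_n(eps)].  Since [zeta_n(eps) -> 0] as [eps -> 1 - a], this holds
   on an interval [[eps_L, 1 - a]]. *)

Lemma prodr_const_ord (R : pzSemiRingType) n (c : R) : \prod_(i < n) c = c ^+ n.
Proof. by rewrite prodr_const card_ord. Qed.

Section ScaledProducts.
Variables (R : realDomainType) (A B : R).
Hypotheses (B_ge0 : 0 <= B) (B_le_A : B <= A).

Lemma ler_prod_scaled n (u v : 'I_n -> R) :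
  (forall i, 0 <= u i) -> (forall i, u i * B <= v i * A) ->
  (\prod_i u i) * (A + B) ^+ n <= A ^+ n * \prod_i (u i + v i).
Proof.
move=> u_ge0 uv; rewrite -!prodr_const_ord -!big_split /=.
apply: ler_prod => i _; have := u_ge0 i; have := uv i => uvi ui.
rewrite mulr_ge0 ?addr_ge0 ?(le_trans B_ge0 B_le_A) //=; nra.
Qed.

Lemma ler_prodB_scaled n (u v : 'I_n -> R) :
  (forall i, 0 <= u i) -> (forall i, 0 <= v i) -> (forall i, u i * B <= v i * A) ->
  (\prod_i u i - \prod_i v i) * (A + B) ^+ n <= (A ^+ n - B ^+ n) * \prod_i (u i + v i).
Proof.
elim: n u v => [|n IHn] u v u_ge0 v_ge0 uv; first by rewrite !big_ord0 !expr0 !subrr !mul0r.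
have := IHn _ _ (fun i => u_ge0 (lift ord0 i)) (fun i => v_ge0 (lift ord0 i)) (fun i => uv _).
have := ler_prod_scaled (n := n) (fun i => u_ge0 (lift ord0 i)) (fun i => uv (lift ord0 i)).
rewrite !big_ord_recl !exprS.
set U := \prod_(i < n) _; set V := \prod_(i < n) _; set S := \prod_(i < n) _.
move: (u_ge0 ord0) (v_ge0 ord0) (uv ord0); set u0 := u ord0; set v0 := v ord0.
have U_ge0 : 0 <= U by apply: prodr_ge0.
have V_ge0 : 0 <= V by apply: prodr_ge0.
have AB_ge0 : 0 <= (A + B) ^+ n by rewrite exprn_ge0 ?addr_ge0 ?(le_trans B_ge0 B_le_A).
have X_ge0 := mulr_ge0 U_ge0 AB_ge0; have Y_ge0 := mulr_ge0 V_ge0 AB_ge0.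
set X := U * (A + B) ^+ n in X_ge0 *; set Y := V * (A + B) ^+ n in Y_ge0 *.
move=> u0_ge0 v0_ge0 u0v0 hX hXY.
(* The difference of the two sides is [(A v0 - u0 B) (X + Y) >= 0]. *)
have step : (u0 * U - v0 * V) * ((A + B) * (A + B) ^+ n) <= (A * X - B * Y) * (u0 + v0).
  have : 0 <= (A * v0 - u0 * B) * (X + Y)
    by apply: mulr_ge0; [rewrite subr_ge0 [A * _]mulrC | exact: addr_ge0].
  rewrite /X /Y; nra.
apply: (le_trans step); rewrite [in leRHS]mulrCA [in leRHS]mulrC.
apply: ler_wpM2r; first lra.
have -> : A * X - B * Y = B * (X - Y) + (A - B) * X by ring.
have -> : (A * A ^+ n - B * B ^+ n) * S =
  B * ((A ^+ n - B ^+ n) * S) + (A - B) * (A ^+ n * S) by ring.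
apply: lerD; apply: ler_wpM2l; rewrite ?subr_ge0 //.
by rewrite /X /Y -mulrBl.
Qed.

End ScaledProducts.

Lemma subrXX_le_mulrn (R : realDomainType) n (x y : R) :
  0 <= y -> y <= x -> x <= 1 -> x ^+ n - y ^+ n <= n%:R * (x - y).
Proof.
move=> y_ge0 yx x_le1; rewrite subrXX mulrC ler_wpM2r ?subr_ge0 //.
have -> : n%:R = \sum_(i < n) (1 : R) by rewrite sumr_const card_ord.
have x_ge0 := le_trans y_ge0 yx; have y_le1 := le_trans yx x_le1.
by apply: ler_sum => i _; apply: mulr_ile1; rewrite ?exprn_ge0 ?exprn_ile1.
Qed.

Lemma sup_attained (R : realType) (E : set R) (m : R) :
  E m -> ubound E m -> sup E = m.
Proof.
move=> Em ubm; apply/le_anti/andP; split; first by apply: ge_sup => //; exists m.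
by apply: sup_upper_bound => //; split; exists m.
Qed.

Section NthRoot.
Variables (R : realType) (n : nat).
Hypothesis n_gt0 : (0 < n)%N.

Let n_neq0 : (n%:R : R) != 0. Proof. by rewrite pnatr_eq0 -lt0n. Qed.

Lemma nroot_ge0 (u : R) : 0 <= nroot n u.
Proof. exact: powR_ge0. Qed.

Lemma exprn_nroot (u : R) : 0 <= u -> nroot n u ^+ n = u.
Proof. by move=> u_ge0; rewrite -powR_mulrn ?nroot_ge0 // -powRrM mulVf ?powRr1. Qed.

Lemma nroot_exprn (e : R) : 0 <= e -> nroot n (e ^+ n) = e.
Proof. by move=> e_ge0; rewrite /nroot -powR_mulrn // -powRrM mulfV ?powRr1. Qed.

Lemma ler_nroot (u v : R) : 0 <= u -> u <= v -> nroot n u <= nroot n v.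
Proof.
move=> u_ge0 uv; apply: ge0_ler_powR; rewrite ?invr_ge0 ?ler0n ?nnegrE //.
exact: le_trans uv.
Qed.

Lemma nroot_le (u e : R) : 0 <= u -> 0 <= e -> (nroot n u <= e) = (u <= e ^+ n).
Proof.
move=> u_ge0 e_ge0; apply/idP/idP => [le_ue | le_ue].
  by rewrite -[u]exprn_nroot // lerXn2r ?nnegrE ?nroot_ge0.
by rewrite -[e]nroot_exprn // ler_nroot.
Qed.

End NthRoot.

Lemma sum_bstr_prod (R : comPzSemiRingType) n (f : 'I_n -> bool -> R) :
  \sum_(y : bstr n) \prod_i f i (y i) = \prod_i (f i false + f i true).
Proof. by rewrite -(bigA_distr_bigA f) /=; apply: eq_bigr => i _; rewrite big_bool addrC. Qed.

Lemma sum_channel (R : realType) n (W : bstr n -> bstr n -> R) (f : bstr n -> R) :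
  is_channel n W -> \sum_z \sum_y f y * W y z = \sum_y f y.
Proof.
by case=> _ W1; rewrite exchange_big; apply: eq_bigr => y _; rewrite -mulr_sumr W1 mulr1.
Qed.

Section ZChannel.
Variables (R : realType) (n : nat) (g : R).
Hypothesis n_gt0 : (0 < n)%N.

Lemma zeros_neq_ones : zeros n != ones n.
Proof. by apply/negP => /eqP/ffunP/(_ (Ordinal n_gt0)); rewrite !ffunE. Qed.

Lemma sum_Zchan_row (F : bstr n -> R) y :
  \sum_z F z * Zchan n g y z =
  if y == ones n then g * F (zeros n) + (1 - g) * F (ones n) else F y.
Proof.
rewrite /Zchan; case: eqVneq => [->|y1] /=.
  rewrite (bigD1 (zeros n)) //= (bigD1 (ones n)) /=; last by rewrite eq_sym zeros_neq_ones.
  rewrite eqxx eq_sym (negbTE zeros_neq_ones) eqxx big1 ?addr0 => [|z /andP[/negbTE-> /negbTE->]].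
    by rewrite mulrC [F _ * _]mulrC.
  by rewrite mulr0.
rewrite (bigD1 y) //= eqxx mulr1 big1 ?addr0 // => z /negbTE->; exact: mulr0.
Qed.

Lemma sum_Zchan_col (F : bstr n -> R) z :
  \sum_y F y * Zchan n g y z = F (ones n) * Zchan n g (ones n) z + (z != ones n)%:R * F z.
Proof.
rewrite (bigD1 (ones n)) //=; congr (_ + _); rewrite /Zchan.
have [->|z1] := eqVneq z (ones n).
  by rewrite mul0r big1 // => y /negbTE y1; rewrite y1 /= eq_sym y1 mulr0.
rewrite mul1r (bigD1 z) //= z1 eqxx mulr1 big1 ?addr0 // => y /andP[y1 /negbTE yz].
by rewrite y1 eq_sym yz mulr0.
Qed.

Lemma Zchan_channel : 0 <= g <= 1 -> is_channel n (Zchan n g).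
Proof.
move=> /andP[g_ge0 g_le1]; split=> [y z | y].
  rewrite /Zchan; case: (y != ones n) => //; case: (z == zeros n) => //.
  by case: (z == ones n); rewrite ?subr_ge0.
have := sum_Zchan_row (fun _ => 1) y; rewrite (eq_bigr _ (fun z _ => mul1r _)) => ->.
by case: (y == ones n); rewrite ?mulr1 ?subrKC.
Qed.

End ZChannel.

Section Model.
Variables (R : realType) (n : nat) (p a : R).
Hypotheses (n_gt0 : (0 < n)%N) (p_ge_half : 2^-1 <= p) (a_ge0 : 0 <= a) (p_le_1a : p <= 1 - a).

Local Notation q := (a * (1 - p) + (1 - a) * p).
Local Notation D := (((1 - a) * p) ^+ n - (a * (1 - p)) ^+ n).
(* A crossover probability, not sharp, below which [0...0] stays the MAP guess
   of [X] from [Z = 0...0]. *)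
Local Notation gmax := (((1 - p) * (1 - a) - p * a) * ((1 - p) * (1 - a)) ^+ n).

(* [lra] ignores section hypotheses: [case: bounds => *] moves these into the context. *)
Let bounds : [/\ 0 <= a, a <= p, 1 - p <= p & p <= 1 - a].
Proof. by move: p_ge_half a_ge0 p_le_1a; rewrite -[2^-1]mul1r; split; lra. Qed.

Let qn_ge0 : 0 <= q ^+ n.
Proof. by case: bounds => *; rewrite exprn_ge0 //; nra. Qed.

Definition pxy1 (x y : bool) : R :=
  (if x then p else 1 - p) * (if x (+) y then a else 1 - a).

Definition PXY (x y : bstr n) : R := PX n p x * PYgX a x y.

Definition PY (y : bstr n) : R := \sum_x PXY x y.

Lemma PXYE x y : PXY x y = \prod_i pxy1 (x i) (y i).
Proof. by rewrite /PXY /PX /PYgX -big_split. Qed.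

Lemma PYE y : PY y = \prod_i (pxy1 false (y i) + pxy1 true (y i)).
Proof.
by rewrite -(sum_bstr_prod (fun i b => pxy1 b (y i))); apply: eq_bigr => x _; rewrite PXYE.
Qed.

Lemma pxy1_ge0 x y : 0 <= pxy1 x y.
Proof. by case: bounds => *; rewrite mulr_ge0 //; [case: x | case: addb]; lra. Qed.

Lemma PXY_ge0 x y : 0 <= PXY x y.
Proof. by rewrite PXYE prodr_ge0 // => i _; apply: pxy1_ge0. Qed.

Lemma PY_ge0 y : 0 <= PY y.
Proof. by apply: sumr_ge0 => x _; apply: PXY_ge0. Qed.

Lemma sum_PY : \sum_y PY y = 1.
Proof.
under eq_bigr do rewrite PYE.
rewrite (sum_bstr_prod (fun i b => pxy1 false b + pxy1 true b)) /pxy1 /=.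
by rewrite -[RHS](expr1n _ n) -prodr_const_ord; apply: eq_bigr => i _; ring.
Qed.

Lemma sum_PXY_diag : \sum_y PXY y y = (1 - a) ^+ n.
Proof.
under eq_bigr do rewrite PXYE.
rewrite (sum_bstr_prod (fun i b => pxy1 b b)) /pxy1 /= -prodr_const_ord.
by apply: eq_bigr => i _; ring.
Qed.

Lemma PY_ones : PY (ones n) = q ^+ n.
Proof. by rewrite PYE -prodr_const_ord; apply: eq_bigr => i _; rewrite ffunE /pxy1 /=; ring. Qed.

Lemma PXY_le_diag x y : PXY x y <= PXY y y.
Proof.
rewrite !PXYE; apply: ler_prod => i _; rewrite pxy1_ge0 /pxy1 /=.
by case: bounds => *; case: (x i); case: (y i) => /=; nra.
Qed.

Lemma PXY_le1 x y : PXY x y <= 1.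
Proof.
rewrite PXYE; apply: prodr_ile1 => i _; rewrite pxy1_ge0 /pxy1 /=.
by case: bounds => *; case: (x i); case: (y i) => /=; nra.
Qed.

Lemma PXY_gap_le x y : (PXY y y - PXY x y) * q ^+ n <= D * PY y.
Proof.
case: bounds => *.
pose u i := pxy1 (y i) (y i); pose v i := pxy1 (~~ y i) (y i).
have B_ge0 : 0 <= a * (1 - p) by rewrite mulr_ge0 // subr_ge0; lra.
have B_le_A : a * (1 - p) <= (1 - a) * p by nra.
have uv i : u i * (a * (1 - p)) <= v i * ((1 - a) * p).
  rewrite /u /v /pxy1; case: (y i) => /=; first lra.
  have : 0 <= a * (1 - a) by rewrite mulr_ge0 // subr_ge0; lra.
  have : (1 - p) * (1 - p) <= p * p by nra.
  nra.
have key := ler_prodB_scaled B_ge0 B_le_A (fun i => pxy1_ge0 _ _) (fun i => pxy1_ge0 _ _) uv.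
have -> : PY y = \prod_i (u i + v i).
  by rewrite PYE; apply: eq_bigr => i _; rewrite /u /v; case: (y i) => //=; rewrite addrC.
rewrite [q]addrC; apply: le_trans key.
rewrite ler_wpM2r ?exprn_ge0 ?addr_ge0 ?(le_trans B_ge0 B_le_A) //.
rewrite !PXYE lerD2l lerN2; apply: ler_prod => i _; rewrite pxy1_ge0 /pxy1 /=.
by case: (x i); case: (y i) => /=; nra.
Qed.

Lemma column_gap_le (w : bstr n -> R) : (forall y, 0 <= w y) ->
  (\sum_y PXY y y * w y - \big[Num.max/0]_x \sum_y PXY x y * w y) * q ^+ n <=
  D * (\sum_y PY y * w y - \big[Num.max/0]_y (PY y * w y)).
Proof.
move=> w_ge0; have PYw_ge0 y : 0 <= PY y * w y by rewrite mulr_ge0 ?PY_ge0.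
have [y0 _ ->] := eq_bigmax (zeros n) xpredT _ isT (fun y _ => PYw_ge0 y).
apply: (@le_trans _ _ ((\sum_y (PXY y y - PXY y0 y) * w y) * q ^+ n)).
  rewrite ler_wpM2r // (eq_bigr _ (fun y _ => mulrBl _ _ _)) sumrB lerD2l lerN2.
  exact: (le_bigmax _ (fun x => \sum_y PXY x y * w y)).
rewrite mulr_suml (bigD1 y0) //= subrr !mul0r add0r.
rewrite (bigD1 y0 (P := xpredT)) //= addrC addrK mulr_sumr; apply: ler_sum => y _.
by rewrite mulrAC mulrA ler_wpM2r ?PXY_gap_le.
Qed.

Lemma PcXgZE W : PcXgZ n p a W = \sum_z \big[Num.max/0]_x \sum_y PXY x y * W y z.
Proof. by []. Qed.

Lemma PcYgZE W : PcYgZ n p a W = \sum_z \big[Num.max/0]_y (PY y * W y z).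
Proof. by apply: eq_bigr => z _; apply: eq_bigr => y _; rewrite /PY big_distrl. Qed.

Lemma PcYgZ_converse W : is_channel n W ->
  ((1 - a) ^+ n - PcXgZ n p a W) * q ^+ n <= D * (1 - PcYgZ n p a W).
Proof.
move=> chW.
have diag : \sum_z \sum_y PXY y y * W y z = (1 - a) ^+ n by rewrite sum_channel ?sum_PXY_diag.
have total : \sum_z \sum_y PY y * W y z = 1 by rewrite sum_channel ?sum_PY.
rewrite PcXgZE PcYgZE -[in X in X * _]diag -[X in _ <= _ * (X - _)]total -!sumrB.
by rewrite mulr_suml mulr_sumr; apply: ler_sum => z _; apply: column_gap_le => y; apply: chW.1.
Qed.

Lemma PcXgZ_ge0 W : 0 <= PcXgZ n p a W.
Proof. by apply: sumr_ge0 => z _; apply: bigmax_ge_id. Qed.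

Lemma PcYgZ_ge0 W : 0 <= PcYgZ n p a W.
Proof. by apply: sumr_ge0 => z _; apply: bigmax_ge_id. Qed.

Lemma PXY_zeros_col_le g x : 0 <= g ->
  g <= gmax ->
  PXY x (zeros n) + g * PXY x (ones n) <= PXY (zeros n) (zeros n) + g * PXY (zeros n) (ones n).
Proof.
move=> g_ge0 g_small; case: bounds => *.
have [->|x_neq0] := eqVneq x (zeros n); first exact: lexx.
have [j xj] : exists j, x j.
  apply/existsP; apply: contraR x_neq0 => /existsPn x0.
  by apply/eqP/ffunP => i; rewrite ffunE; apply/negbTE.
(* A one at coordinate [j] costs [x] the factor [p a] instead of [c] in [PXY x 0]. *)
set c := (1 - p) * (1 - a) in g_small *.
have c_ge0 : 0 <= c by rewrite mulr_ge0 // subr_ge0; lra.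
set M := \prod_(i | i != j) c.
have M_ge0 : 0 <= M by apply: prodr_ge0.
have PXY00 : PXY (zeros n) (zeros n) = c * M.
  by rewrite PXYE (bigD1 j) //=; congr (_ * _); [|apply: eq_bigr => i _]; rewrite !ffunE.
have cn : c ^+ n = c * M by rewrite -prodr_const_ord (bigD1 j).
have PXYx0 : PXY x (zeros n) <= p * a * M.
  rewrite PXYE (bigD1 j) //= xj ffunE; apply: ler_wpM2l; first exact: pxy1_ge0.
  apply: ler_prod => i _; rewrite pxy1_ge0 ffunE /pxy1 /c /=.
  by case: (x i) => /=; nra.
have gx1 : g * PXY x (ones n) <= (c - p * a) * M.
  have cpa_ge0 : 0 <= c - p * a by rewrite /c; nra.
  have c_le1 : c <= 1 by rewrite /c; nra.
  apply: le_trans (_ : g <= _); first exact: ler_piMr g_ge0 (PXY_le1 _ _).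
  by apply: (le_trans g_small); rewrite cn mulrCA ler_piMl ?mulr_ge0.
apply: le_trans (lerD PXYx0 gx1) _.
by rewrite -mulrDl addrC subrK PXY00 lerDl mulr_ge0 ?PXY_ge0.
Qed.

Lemma Zchan_MAP g x z : 0 <= g <= 1 ->
  g <= gmax ->
  \sum_y PXY x y * Zchan n g y z <= \sum_y PXY z y * Zchan n g y z.
Proof.
move=> /andP[g_ge0 g_le1] g_small; rewrite !sum_Zchan_col.
have [->|z1] := eqVneq z (ones n).
  rewrite !mul0r !addr0 ler_wpM2r ?PXY_le_diag // /Zchan eqxx /=.
  by rewrite eq_sym (negbTE (zeros_neq_ones n_gt0)) subr_ge0.
rewrite !mul1r; have [->|z0] := eqVneq z (zeros n).
  by rewrite /Zchan eqxx /= eqxx ![_ * g]mulrC addrC [X in _ <= X]addrC PXY_zeros_col_le.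
by rewrite /Zchan eqxx /= (negbTE z0) (negbTE z1) !mulr0 !add0r PXY_le_diag.
Qed.

Lemma PcXgZ_Zchan_le g : 0 <= g <= 1 ->
  g <= gmax ->
  PcXgZ n p a (Zchan n g) <= (1 - a) ^+ n - g * D.
Proof.
move=> g01 g_small; have [Z_ge0 _] := Zchan_channel n_gt0 g01.
apply: (@le_trans _ _ (\sum_z \sum_y PXY z y * Zchan n g y z)).
  apply: ler_sum => z _; apply: bigmax_le => [|x _]; last exact: Zchan_MAP.
  by apply: sumr_ge0 => y _; rewrite mulr_ge0 ?PXY_ge0.
rewrite exchange_big /=; under eq_bigr do rewrite sum_Zchan_row //.
rewrite -sum_PXY_diag (bigD1 (ones n)) //= eqxx [in leRHS](bigD1 (ones n)) //=.
rewrite (eq_bigr (fun y => PXY y y)) => [|y /negbTE-> //].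
have P11 : PXY (ones n) (ones n) = ((1 - a) * p) ^+ n.
  by rewrite PXYE -prodr_const_ord; apply: eq_bigr => i _; rewrite !ffunE /pxy1 /= mulrC.
have P01 : PXY (zeros n) (ones n) = (a * (1 - p)) ^+ n.
  by rewrite PXYE -prodr_const_ord; apply: eq_bigr => i _; rewrite !ffunE /pxy1 /= mulrC.
rewrite -P11 -P01; lra.
Qed.

Lemma PcYgZ_Zchan_ge g : 1 - g * q ^+ n <= PcYgZ n p a (Zchan n g).
Proof.
rewrite PcYgZE; apply: (@le_trans _ _ (\sum_z PY z * Zchan n g z z)); last first.
  by apply: ler_sum => z _; apply: (le_bigmax _ (fun y => PY y * Zchan n g y z)).
rewrite -[X in X - _ <= _]sum_PY (bigD1 (ones n)) //= [in leRHS](bigD1 (ones n)) //= PY_ones.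
rewrite [in leRHS](eq_bigr PY) => [|z /negbTE z1]; last by rewrite /Zchan z1 /= eqxx mulr1.
rewrite /Zchan (eqxx (ones n)) /= eq_sym (negbTE (zeros_neq_ones n_gt0)); lra.
Qed.

Lemma Zchan_optimal eps : 0 < D -> 0 <= eps -> 0 <= zeta n p a eps <= 1 ->
  zeta n p a eps <= gmax ->
  hlow n p a eps ^+ n = 1 - zeta n p a eps * q ^+ n /\
  achieves n p a eps (Zchan n (zeta n p a eps)).
Proof.
move=> D_gt0 eps_ge0 g01 g_small; set g := zeta n p a eps in g01 g_small *.
have gD : g * D = (1 - a) ^+ n - eps ^+ n by rewrite mulfVK ?gt_eqF.
have feasZ : feasible n p a eps (Zchan n g).
  split; first exact: Zchan_channel.
  by rewrite nroot_le ?PcXgZ_ge0 //; apply: le_trans (PcXgZ_Zchan_le g01 g_small) _; lra.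
have opt W : feasible n p a eps W -> PcYgZ n p a W <= 1 - g * q ^+ n.
  case=> chW; rewrite nroot_le ?PcXgZ_ge0 // => PcX_le.
    suff : g * q ^+ n <= 1 - PcYgZ n p a W by lra.
  rewrite -(ler_pM2l D_gt0); apply: le_trans (PcYgZ_converse chW).
  by rewrite mulrA [D * g]mulrC gD ler_wpM2r // lerD2l lerN2.
have PcYZ : PcYgZ n p a (Zchan n g) = 1 - g * q ^+ n.
  by apply/le_anti; rewrite opt ?PcYgZ_Zchan_ge.
have hlowE : hlow n p a eps = nroot n (PcYgZ n p a (Zchan n g)).
  apply: sup_attained; first by exists (Zchan n g).
  by move=> r [W [fW ->]]; rewrite ler_nroot ?PcYgZ_ge0 // PcYZ opt.
by rewrite hlowE (exprn_nroot n_gt0) ?PcYgZ_ge0 // PcYZ.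
Qed.

End Model.

Lemma zeta_near_top (R : realType) n (p a gam : R) :
  (0 < n)%N -> 0 <= a -> 0 <= p -> p < 1 - a ->
  0 < ((1 - a) * p) ^+ n - (a * (1 - p)) ^+ n -> 0 < gam ->
  exists epsL, [/\ p <= epsL, epsL < 1 - a &
    forall eps, epsL <= eps -> eps <= 1 - a -> 0 <= zeta n p a eps <= gam].
Proof.
move=> n_gt0 a_ge0 p_ge0 p_lt D_gt0 gam_gt0.
set D := _ - _ in D_gt0; have n_pos : (0 : R) < n%:R by rewrite ltr0n.
(* [(1 - a)^n - eps^n <= n (1 - a - eps) <= gam D] once [eps >= 1 - a - gam D / n]. *)
have del_gt0 : 0 < gam * D / n%:R by rewrite divr_gt0 ?mulr_gt0.
exists (Num.max p (1 - a - gam * D / n%:R)); split; first by rewrite le_max lexx.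
  by rewrite gt_max p_lt /=; lra.
move=> eps; rewrite ge_max => /andP[p_le eps_near] eps_le; have eps_ge0 : 0 <= eps by lra.
rewrite /zeta -/D divr_ge0 ?(ltW D_gt0) ?subr_ge0 ?lerXn2r ?nnegrE //=; last lra.
rewrite ler_pdivrMr //; apply: le_trans (subrXX_le_mulrn n eps_ge0 eps_le _) _; first lra.
by rewrite -ler_pdivlMl // mulrC; lra.
Qed.

Theorem theorem4 (R : realType) (n : nat) (p a : R) :
  (0 < n)%N ->
  2^-1 <= p -> p < 1 ->
  0 <= a -> a < 2^-1 -> p < 1 - a ->
  let q := a * (1 - p) + (1 - a) * p in
  exists epsL : R, p <= epsL /\ epsL < 1 - a /\
    forall eps : R, epsL <= eps -> eps <= 1 - a ->
      (hlow n p a eps) ^+ n = 1 - zeta n p a eps * q ^+ n /\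
      achieves n p a eps (Zchan n (zeta n p a eps)).
Proof.
move=> n_gt0 p_ge_half p_lt1 a_ge0 a_lt_half p_lt_1a q.
have a_lt_p : a < p by move: p_ge_half a_lt_half; rewrite -[2^-1]mul1r; lra.
set c := (1 - p) * (1 - a); set g1 := (c - p * a) * c ^+ n.
have D_gt0 : 0 < ((1 - a) * p) ^+ n - (a * (1 - p)) ^+ n.
  by rewrite subr_gt0 ltrXn2r -?lt0n ?mulr_ge0 //; [lra | nra].
have g1_gt0 : 0 < g1 by rewrite /g1 /c mulr_gt0 ?exprn_gt0 ?mulr_gt0; nra.
have gam_gt0 : 0 < Num.min 1 g1 by rewrite lt_min ltr01.
have [epsL [p_le epsL_lt near_top]] :=
  zeta_near_top n_gt0 a_ge0 (le_trans a_ge0 (ltW a_lt_p)) p_lt_1a D_gt0 gam_gt0.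
exists epsL; do 2!split => //; move=> eps epsL_le eps_le.
have /andP[g_ge0] := near_top eps epsL_le eps_le; rewrite le_min => /andP[g_le1 g_small].
apply: Zchan_optimal; rewrite ?g_ge0 //; lra.
Qed.
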